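(* For $k\ge0$ let $(\mathfrak{S}Sym)^k$ be the span of $\{\mathcal{M}_u:u\in\mathfrak{S}^k\}$, where $\mathfrak{S}^0=\mathfrak{S}_0$ and, for $k\ge1$, $\mathfrak{S}^k=\bigsqcup_{n\ge1}\{u\in\mathfrak{S}_n: \#\mathrm{GDes}(u)=k-1\}$. Then $\mathfrak{S}Sym=\bigoplus_{k\ge0}(\mathfrak{S}Sym)^k$ is a coalgebra grading, i.e. $\Delta((\mathfrak{S}Sym)^k)\subseteq\bigoplus_{i=0}^k(\mathfrak{S}Sym)^i\otimes(\mathfrak{S}Sym)^{k-i}$, and with this grading $\mathfrak{S}Sym$ is isomorphic as a graded coalgebra to the cofree graded coalgebra $Q(V)$ on $V=(\mathfrak{S}Sym)^1$.
   Context: Permutations in one-line notation, product is composition; $\mathfrak{S}_0$ has one element. $\mathrm{GDes}(u)=\{p\in[n-1]:u_i>u_j\text{ for all }i\le p<j\}$. $\mathrm{st}(a_1,\ldots,a_m)\in\mathfrak{S}_m$ is the permutation with the same relative order as the distinct integers $a_i$; $u\times v\in\mathfrak{S}_{p+q}$ for $u\in\mathfrak{S}_p,v\in\mathfrak{S}_q$ has $(u\times v)(i)=u_i$ ($i\le p$), $(u\times v)(p+j)=p+v_j$. $\mathfrak{S}Sym$ is the Hopf algebra over $\mathbb{Q}$ with basis $\{\mathcal{F}_u:u\in\mathfrak{S}_n,n\ge0\}$, product $\mathcal{F}_u\cdot\mathcal{F}_v=\sum_\zeta\mathcal{F}_{(u\times v)\zeta^{-1}}$ over $\zeta\in\mathfrak{S}_{p+q}$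 increasing on $[1,p]$ and on $[p+1,p+q]$, coproduct $\Delta(\mathcal{F}_u)=\sum_{p=0}^n\mathcal{F}_{\mathrm{st}(u_1..u_p)}\otimes\mathcal{F}_{\mathrm{st}(u_{p+1}..u_n)}$. Weak order: $u\le v$ iff $\mathrm{Inv}(u)\subseteq\mathrm{Inv}(v)$, $\mathrm{Inv}(u)=\{(i,j):i<j,u_i>u_j\}$; Möbius function $\mu$. $\mathcal{M}_u=\sum_{v\ge u}\mu(u,v)\mathcal{F}_v$. For a vector space $V$, $Q(V)=\bigoplus_{k\ge0}V^{\otimes k}$ graded by $k$, with deconcatenation coproduct $\Delta(v_1\otimes\cdots\otimes v_k)=\sum_{i=0}^k(v_1\otimes\cdots\otimes v_i)\otimes(v_{i+1}\otimes\cdots\otimes v_k)$ and counit vanishing on $V^{\otimes k}$, $k\ge1$. *)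

From HB Require Import structures.
From mathcomp Require Import all_boot all_order all_algebra.
From mathcomp Require Import finmap.
From mathcomp Require Import monalg.
Set Implicit Arguments. Unset Strict Implicit. Unset Printing Implicit Defensive.
Import Order.TTheory GRing.Theory Num.Theory.

Definition is_perm (s : seq nat) : bool := perm_eq s (iota 1 (size s)).

Record Perm := MkPerm { pseq : seq nat; pseqP : is_perm pseq }.
HB.instance Definition _ := [isSub for pseq].
HB.instance Definition _ := [Choice of Perm by <:].

Definition perm0 : Perm := @MkPerm [::] erefl.

Definition psize (u : Perm) : nat := size (pseq u).

(** standardization st(a_1..a_m): rank of each a_i among the a_j (1-based);
    for distinct a_i this is always a permutation, so the default [perm0]
    of [insubd] is never used. *)
Definition st (a : seq nat) : seq nat := [seq count (fun b => b <= x)%N a | x <- a].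
Definition stP (a : seq nat) : Perm := insubd perm0 (st a).

Definition perms_of (n : nat) : seq Perm := pmap insub (permutations (iota 1 n)).

Definition inv (u : seq nat) : seq (nat * nat) :=
  [seq ij <- [seq (i, j) | i <- iota 0 (size u), j <- iota 0 (size u)]
     | (ij.1 < ij.2)%N && (nth 0 u ij.2 < nth 0 u ij.1)%N].

Definition weak_le (u v : Perm) : bool :=
  (psize u == psize v) && all (fun p => p \in inv (pseq v)) (inv (pseq u)).

(** Möbius function of the weak order on S_n:
    mu(u,u) = 1, mu(u,v) = - sum_{u <= w < v} mu(u,w) for u < v, 0 otherwise.
    The fuel |Inv v| + 1 suffices since w < v implies |Inv w| < |Inv v|. *)
Fixpoint mob_aux (fuel : nat) (u v : Perm) : rat :=
  match fuel with
  | 0 => 0%R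
  | f.+1 =>
      if u == v then 1%R
      else if weak_le u v then
        (- \sum_(w <- perms_of (psize v) | weak_le u w && weak_le w v && (w != v))
            mob_aux f u w)%R
      else 0%R
  end.
Definition mobius (u v : Perm) : rat := mob_aux (size (inv (pseq v))).+1 u v.

Notation SSym := {malg rat[Perm]}.
Notation SSym2 := {malg rat[(Perm * Perm)%type]}.

Definition F (u : Perm) : SSym := << u >>%R.

Definition M (u : Perm) : SSym :=
  (\sum_(v <- perms_of (psize u) | weak_le u v) mobius u v *: F v)%R.

Definition gdes (u : seq nat) : seq nat :=
  [seq p <- iota 1 (size u).-1 |
     all (fun a => all (fun b => b < a)%N (drop p u)) (take p u)].

Definition kdeg (u : Perm) : nat :=
  if psize u == 0%N then 0%N else (size (gdes (pseq u))).+1.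

Definition SSymGr (k : nat) (x : SSym) : Prop :=
  exists (s : seq Perm) (c : Perm -> rat),
    all (fun u => kdeg u == k) s /\ x = (\sum_(u <- s) c u *: M u)%R.

Definition lin_ext (K : choiceType) (V : lmodType rat) (f : K -> V)
  (x : {malg rat[K]}) : V := (\sum_(a <- msupp x) x@_a *: f a)%R.

Definition tens (K1 K2 : choiceType) (x : {malg rat[K1]}) (y : {malg rat[K2]})
  : {malg rat[(K1 * K2)%type]} :=
  (\sum_(a <- msupp x) \sum_(b <- msupp y) << (x@_a * y@_b) *g (a, b) >>)%R.

Definition tmap (K1 K2 L1 L2 : choiceType)
  (f : {malg rat[K1]} -> {malg rat[L1]}) (g : {malg rat[K2]} -> {malg rat[L2]})
  (z : {malg rat[(K1 * K2)%type]}) : {malg rat[(L1 * L2)%type]} :=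
  (\sum_(ab <- msupp z) z@_ab *: tens (f << ab.1 >>) (g << ab.2 >>))%R.

Definition copS_basis (u : Perm) : SSym2 :=
  (\sum_(p < (psize u).+1) << (stP (take p (pseq u)), stP (drop p (pseq u))) >>)%R.
Definition copS (x : SSym) : SSym2 := lin_ext copS_basis x.
Definition epsS (x : SSym) : rat := x@_perm0.

(** * Q(V), V = (SSym)^1, with basis {M_u : u in S^1};
    V^{(x)k} has basis the words of length k in S^1. *)
Record S1 := MkS1 { s1val : Perm; s1P : kdeg s1val == 1%N }.
HB.instance Definition _ := [isSub for s1val].
HB.instance Definition _ := [Choice of S1 by <:].

Notation QV := {malg rat[seq S1]}.
Notation QV2 := {malg rat[(seq S1 * seq S1)%type]}.

Definition copQ_basis (w : seq S1) : QV2 :=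
  (\sum_(i < (size w).+1) << (take i w, drop i w) >>)%R.
Definition copQ (x : QV) : QV2 := lin_ext copQ_basis x.
Definition epsQ (x : QV) : rat := x@_[::].

Definition QGr (k : nat) (x : QV) : Prop :=
  forall w, w \in msupp x -> size w = k.

(* Every permutation factors uniquely as u = c_1 \ c_2 \ ... \ c_k with no c_i having a
   global descent, and then #GDes(u) = k - 1; so the words c_1 ... c_k index a basis of
   Q(V), the words of length k spanning V^(x)k.  The map phi sending F_u to the sum of the
   words of all w >= u in the weak order sends M_u to the word of u by Mobius inversion, so
   it is a linear bijection carrying (SSym)^k onto V^(x)k.  It is a coalgebra map because,
   by Aguiar and Sottile, the w >= u with a global descent at p are exactly the a \ b with
   a >= st(u_1 .. u_p) and b >= st(u_p+1 .. u_n), while the global descents of c_1 \ ... \ c_k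
   are the cuts between its factors, so that splitting at them is deconcatenation.  The
   grading of the coproduct of SSym is then transported from Q(V). *)

From Pilot Require Import Defs.
From HB Require Import structures.
From mathcomp Require Import all_boot all_order all_algebra finmap monalg.
Set Implicit Arguments. Unset Strict Implicit. Unset Printing Implicit Defensive.
Import GRing.Theory.

Lemma mem_perms_of n (u : Perm) : (u \in perms_of n) = (psize u == n).
Proof.
rewrite /perms_of mem_pmap_sub mem_permutations /psize.
apply/idP/eqP => [/perm_size|<-]; first by rewrite size_iota.
exact: pseqP.
Qed.

Lemma uniq_perms_of n : uniq (perms_of n).
Proof. exact/pmap_sub_uniq/permutations_uniq. Qed.

Lemma is_perm_uniq s : is_perm s -> uniq s.
Proof. by move/perm_uniq => ->; exact: iota_uniq. Qed.

Lemma is_perm_mem s x : is_perm s -> (x \in s) = (0 < x <= size s).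
Proof. by move/perm_mem => ->; rewrite mem_iota add1n ltnS. Qed.

Lemma perm_uniq_take (u : Perm) p : uniq (take p (pseq u)).
Proof. exact/take_uniq/is_perm_uniq/pseqP. Qed.

Lemma perm_uniq_drop (u : Perm) p : uniq (drop p (pseq u)).
Proof. exact/drop_uniq/is_perm_uniq/pseqP. Qed.

Lemma psize_eq0 (u : Perm) : psize u = 0 -> u = perm0.
Proof. by case: u => s hs /size0nil e; apply/val_inj. Qed.

Lemma size_st s : size (st s) = size s.
Proof. exact: size_map. Qed.

Lemma nth_st s i : i < size s -> nth 0 (st s) i = count (leq^~ (nth 0 s i)) s.
Proof. by move=> hi; rewrite /st (nth_map 0). Qed.

Lemma count_leq_iota x n : 0 < x <= n -> count (leq^~ x) (iota 1 n) = x.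
Proof.
case/andP=> x0 xn; rewrite -(subnKC xn) iotaD count_cat.
rewrite (eq_in_count (a2 := predT)) ?count_predT ?size_iota; last first.
  by move=> y; rewrite mem_iota add1n ltnS => /andP[].
rewrite (eq_in_count (a2 := pred0)) ?count_pred0 ?addn0 // => y.
by rewrite mem_iota add1n => /andP[h _] /=; apply/negbTE; rewrite -ltnNge.
Qed.

Lemma st_id s : is_perm s -> st s = s.
Proof.
move=> hs; rewrite /st -[RHS]map_id; apply/eq_in_map => x xs.
by rewrite (permP hs) count_leq_iota // -(is_perm_mem _ hs).
Qed.

Lemma ltn_count_leq s x y : x \in s ->
  (count (leq^~ y) s < count (leq^~ x) s) = (y < x).
Proof.
move=> xs; case: (ltnP y x) => hyx; last first.
  by rewrite ltnNge; apply/negbF/sub_count => b /= h; apply: leq_trans h hyx.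
elim: s xs => //= z s IH; rewrite in_cons => /orP[/eqP<-|xs].
  rewrite leqnn (leqNgt x y) hyx add0n add1n ltnS.
  by apply: sub_count => b /= h; apply: leq_trans h (ltnW hyx).
rewrite -addnS leq_add ?IH //.
by case: (leqP z y) => //= h; rewrite (leq_trans h (ltnW hyx)).
Qed.

Lemma ltn_nth_st s i j : i < size s -> j < size s ->
  (nth 0 (st s) j < nth 0 (st s) i) = (nth 0 s j < nth 0 s i).
Proof. by move=> hi hj; rewrite !nth_st // ltn_count_leq // mem_nth. Qed.

Lemma is_perm_st s : uniq s -> is_perm (st s).
Proof.
move=> us; have ust : uniq (st s).
  rewrite map_inj_in_uniq // => x y xs ys /= e.
  by case: (ltngtP x y) => // h; [move: (ltn_count_leq x ys) | move: (ltn_count_leq y xs)];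
    rewrite e ltnn h.
apply: uniq_perm; rewrite ?iota_uniq //.
have sub : {subset st s <= iota 1 (size (st s))}.
  move=> z /mapP[x xs ->]; rewrite mem_iota add1n ltnS size_st count_size andbT.
  by rewrite -has_count; apply/hasP; exists x.
by have [] := uniq_min_size ust sub; rewrite ?size_iota.
Qed.

Lemma pseq_stP s : uniq s -> pseq (stP s) = st s.
Proof. by move=> us; rewrite /stP insubdK //; exact: is_perm_st. Qed.

Lemma psize_stP s : uniq s -> psize (stP s) = size s.
Proof. by move=> us; rewrite /psize pseq_stP // size_st. Qed.

Lemma st_map_addn k s : st (map (addn k) s) = st s.
Proof.
rewrite /st -map_comp; apply: eq_map => x /=; rewrite count_map.
by apply: eq_count => y /=; rewrite leq_add2l.
Qed.

Lemma st_cat s1 s2 : {in s1 & s2, forall x y, y < x} ->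
  st (s1 ++ s2) = map (addn (size s2)) (st s1) ++ st s2.
Proof.
move=> h; rewrite /st map_cat -!map_comp; congr (_ ++ _); apply/eq_in_map => x xs /=.
  rewrite count_cat addnC -[in RHS](count_predT s2); congr (_ + _).
  by apply: eq_in_count => y ys; exact: ltnW (h _ _ xs ys).
rewrite count_cat (eq_in_count (a2 := pred0)) ?count_pred0 // => y ys /=.
by apply/negbTE; rewrite -ltnNge h.
Qed.

Definition slash (a b : seq nat) := map (addn (size b)) a ++ b.

Lemma size_slash a b : size (slash a b) = size a + size b.
Proof. by rewrite size_cat size_map. Qed.

Lemma slashA a b c : slash (slash a b) c = slash a (slash b c).
Proof.
rewrite /slash map_cat -catA -map_comp size_cat size_map; congr (_ ++ _).
by apply: eq_map => x /=; rewrite addnA [size c + _]addnC.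
Qed.

Lemma is_perm_slash a b : is_perm a -> is_perm b -> is_perm (slash a b).
Proof.
move=> ha hb; rewrite /is_perm size_slash addnC iotaD perm_catC -addnC iotaDl.
by apply: perm_cat => //; apply: perm_map.
Qed.

Lemma slash_gt a b : is_perm a -> is_perm b -> {in a & b, forall x y, y < size b + x}.
Proof.
move=> ha hb x y; rewrite (is_perm_mem _ ha) (is_perm_mem _ hb) => /andP[x0 _] /andP[_ yb].
by rewrite -addn1 leq_add.
Qed.

Lemma st_slash_take a b : is_perm a -> st (take (size a) (slash a b)) = a.
Proof. by move=> ha; rewrite take_size_cat ?size_map // st_map_addn st_id. Qed.

Lemma st_slash_drop a b : is_perm b -> st (drop (size a) (slash a b)) = b.
Proof. by move=> hb; rewrite drop_size_cat ?size_map // st_id. Qed.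

Definition is_gdes (s : seq nat) p :=
  all (fun x => all (fun y => y < x) (drop p s)) (take p s).

Lemma is_gdes0 s : is_gdes s 0. Proof. by rewrite /is_gdes take0. Qed.

Lemma is_gdes_size s : is_gdes s (size s).
Proof. by rewrite /is_gdes drop_size; apply/allP. Qed.

Lemma slash_st_take_drop s p : is_perm s -> is_gdes s p ->
  slash (st (take p s)) (st (drop p s)) = s.
Proof.
move=> hs g; rewrite /slash size_st -st_cat ?cat_take_drop ?st_id // => x y xt yd.
by move/allP: g => /(_ x xt) /allP; apply.
Qed.

Lemma is_gdes_slash_l a b p : is_perm a -> is_perm b -> p <= size a ->
  is_gdes (slash a b) p = is_gdes a p.
Proof.
move=> ha hb hp; have e : slash a b =
    take p (map (addn (size b)) a) ++ (drop p (map (addn (size b)) a) ++ b).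
  by rewrite catA cat_take_drop.
rewrite /is_gdes e take_size_cat ?drop_size_cat ?size_takel ?size_map //.
rewrite -map_take -map_drop all_map; apply: eq_in_all => x /mem_take xa /=.
rewrite all_cat all_map (_ : all _ b = true); last first.
  by apply/allP => y yb; exact: (slash_gt ha hb xa yb).
by rewrite andbT; apply: eq_all => y; rewrite /= ltn_add2l.
Qed.

Lemma is_gdes_slash_r a b q : is_perm a -> is_perm b ->
  is_gdes (slash a b) (size a + q) = is_gdes b q.
Proof.
move=> ha hb; rewrite /is_gdes /slash take_cat drop_cat size_map.
rewrite ltnNge leq_addr /= addKn all_cat all_map.
have -> // : all (fun x => all (fun y => y < size b + x) (drop q b)) a.
by apply/allP => x xa; apply/allP => y /mem_drop; exact: (slash_gt ha hb xa).
Qed.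

Lemma is_gdes_slash a b : is_perm a -> is_perm b -> is_gdes (slash a b) (size a).
Proof. by move=> ha hb; rewrite -[size a]addn0 is_gdes_slash_r // is_gdes0. Qed.

Lemma mem_inv s i j :
  ((i, j) \in Defs.inv s) = [&& i < j, j < size s & nth 0 s j < nth 0 s i].
Proof.
rewrite /Defs.inv mem_filter /=; have -> : (i, j) \in
    [seq (x, y) | x <- iota 0 (size s), y <- iota 0 (size s)] = (i < size s) && (j < size s).
  apply/allpairsP/andP => [[[x y] /= [+ + [-> ->]]]|[hi hj]]; first by rewrite !mem_iota.
  by exists (i, j); rewrite !mem_iota.
case: (ltnP i j) => //= ij; case: (ltnP j (size s)) => js; rewrite ?andbF ?andbT //.
by rewrite (ltn_trans ij js) andbC.
Qed.

Lemma uniq_inv s : uniq (Defs.inv s).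
Proof.
apply/filter_uniq/allpairs_uniq; rewrite ?iota_uniq //.
by move=> [a b] [c d] _ _ /= [-> ->].
Qed.

Definition inv_le (s t : seq nat) := forall i j, i < j -> j < size s ->
  nth 0 s j < nth 0 s i -> nth 0 t j < nth 0 t i.

Lemma weak_leP u v :
  reflect (psize u = psize v /\ inv_le (pseq u) (pseq v)) (weak_le u v).
Proof.
apply: (iffP andP) => [[/eqP e /allP h]|[e h]]; split => //.
- move=> i j ij ju ltu; have := h (i, j).
  by rewrite !mem_inv ij ju ltu -/(psize v) -e ju; apply.
- exact/eqP.
apply/allP => -[i j]; rewrite !mem_inv => /and3P[ij ju ltu].
by rewrite ij -/(psize v) -e ju (h i j).
Qed.

Lemma weak_le_refl u : weak_le u u.
Proof. by apply/weak_leP; split. Qed.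

Lemma weak_le_trans u v w : weak_le u v -> weak_le v w -> weak_le u w.
Proof.
move=> /weak_leP[e1 h1] /weak_leP[e2 h2]; apply/weak_leP; split; first by rewrite e1.
by move=> i j ij ju lt; apply: h2 (h1 _ _ ij ju lt); rewrite // -/(psize v) -e1.
Qed.

Lemma weak_le_psize u v : weak_le u v -> psize u = psize v.
Proof. by case/weak_leP. Qed.

Lemma nth_perm_count (u : Perm) i : i < psize u -> nth 0 (pseq u) i =
  count (fun j => ~~ (nth 0 (pseq u) i < nth 0 (pseq u) j)) (iota 0 (psize u)).
Proof.
move=> hi; rewrite -{1}(st_id (pseqP u)) nth_st //.
rewrite -[X in count _ X](mkseq_nth 0 (pseq u)) /mkseq count_map.
by apply: eq_count => j; rewrite /= leqNgt.
Qed.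

Lemma ltn_nth_uniqC s i j : uniq s -> i < size s -> j < size s -> i != j ->
  (nth 0 s j < nth 0 s i) = ~~ (nth 0 s i < nth 0 s j).
Proof. by move=> us hi hj ij; rewrite ltnNge leq_eqVlt nth_uniq // (negbTE ij). Qed.

Lemma weak_le_anti u v : weak_le u v -> weak_le v u -> u = v.
Proof.
move=> /weak_leP[e h1] /weak_leP[_ h2]; apply/val_inj/(@eq_from_nth _ 0) => // i hi.
change (nth 0 (pseq u) i = nth 0 (pseq v) i); have {}hi : i < psize u := hi.
have uu := is_perm_uniq (pseqP u); have uv := is_perm_uniq (pseqP v).
have hi' : i < size (pseq v) by rewrite -/(psize v) -e.
have same j : j < psize u -> (nth 0 (pseq u) i < nth 0 (pseq u) j) =
                              (nth 0 (pseq v) i < nth 0 (pseq v) j).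
  move=> hj; have hj' : j < size (pseq v) by rewrite -/(psize v) -e.
  case: (ltngtP i j) => [ij|ji|->]; last by rewrite !ltnn.
  - have nji : j != i by rewrite gtn_eqF.
    rewrite (ltn_nth_uniqC uu hj hi nji) (ltn_nth_uniqC uv hj' hi' nji).
    by congr negb; apply/idP/idP => lt; [exact: h1 | exact: h2].
  - by apply/idP/idP => lt; [exact: h1 | exact: h2].
rewrite (nth_perm_count hi) (nth_perm_count (u := v)) -/(psize v) -?e //.
by apply: eq_in_count => j; rewrite mem_iota => /same ->.
Qed.

Lemma weak_le_ltn_inv u v : weak_le u v -> u != v ->
  size (Defs.inv (pseq u)) < size (Defs.inv (pseq v)).
Proof.
move=> le neq; have sub : {subset Defs.inv (pseq u) <= Defs.inv (pseq v)}.
  by case/andP: le => _ /allP.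
rewrite ltn_neqAle uniq_leq_size ?uniq_inv // andbT; apply: contra neq => /eqP esz.
have [_ eqi] := uniq_min_size (uniq_inv _) sub (eq_leq (esym esz)).
apply/eqP/weak_le_anti => //; apply/andP; split.
  by rewrite (weak_le_psize le).
by apply/allP => x; rewrite -eqi.
Qed.

Lemma inv_le_st s t : inv_le (st s) t <-> inv_le s t.
Proof.
split=> h i j ij; rewrite ?size_st => js; have hi := ltn_trans ij js.
  by rewrite -ltn_nth_st //; apply: h; rewrite ?size_st.
by rewrite ltn_nth_st //; apply: h.
Qed.

Lemma inv_le_map_addn s t k : size s = size t ->
  inv_le s (map (addn k) t) <-> inv_le s t.
Proof.
move=> e; split=> h i j ij js; have hi := ltn_trans ij js.
  by move/(h i j ij js); rewrite !(nth_map 0) -?e // ltn_add2l.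
by rewrite !(nth_map 0) -?e // ltn_add2l; apply: h.
Qed.

Lemma inv_le_cat s1 s2 t1 t2 : size s1 = size t1 -> size s2 = size t2 ->
  {in t1 & t2, forall x y, y < x} ->
  inv_le (s1 ++ s2) (t1 ++ t2) <-> inv_le s1 t1 /\ inv_le s2 t2.
Proof.
move=> e1 e2 cross; split=> [h|[h1 h2] i j ij].
  split=> i j ij js.
    have hi := ltn_trans ij js; have := h i j ij.
    by rewrite size_cat !nth_cat -e1 hi js ltn_addr //; apply.
  have lt_add k : (size s1 + k < size s1) = false by rewrite ltnNge leq_addr.
  have := h (size s1 + i) (size s1 + j); rewrite ltn_add2l size_cat ltn_add2l.
  by move=> /(_ ij js); rewrite !nth_cat -e1 !lt_add !addKn.
rewrite size_cat !nth_cat -e1 => jn; case: (ltnP j (size s1)) => js1.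
  by rewrite (ltn_trans ij js1); apply: h1.
case: (ltnP i (size s1)) => is1 lt.
  by apply: cross; apply: mem_nth; rewrite -?e1 -?e2 // ltn_subLR.
have ij' : i - size s1 < j - size s1 by rewrite ltn_sub2r // (leq_ltn_trans is1 ij).
by apply: h2 ij' _ lt; rewrite ltn_subLR.
Qed.

Definition pslash (a b : Perm) : Perm := MkPerm (is_perm_slash (pseqP a) (pseqP b)).

Lemma psize_pslash a b : psize (pslash a b) = psize a + psize b.
Proof. exact: size_slash. Qed.

Lemma weak_le_stP s (c : Perm) : uniq s -> size s = psize c ->
  weak_le (stP s) c <-> inv_le s (pseq c).
Proof.
move=> us e; rewrite -inv_le_st -(pseq_stP us).
by split=> [/weak_leP[]//|h]; apply/weak_leP; rewrite psize_stP.
Qed.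

Lemma weak_le_pslash (u a b : Perm) : psize u = psize a + psize b ->
  weak_le u (pslash a b) = weak_le (stP (take (psize a) (pseq u))) a &&
                           weak_le (stP (drop (psize a) (pseq u))) b.
Proof.
move=> hu; have ut := perm_uniq_take u (psize a); have ud := perm_uniq_drop u (psize a).
have sz1 : size (take (psize a) (pseq u)) = psize a.
  by rewrite size_takel // -/(psize u) hu leq_addr.
have sz2 : size (drop (psize a) (pseq u)) = psize b by rewrite size_drop -/(psize u) hu addKn.
have cross := slash_gt (pseqP a) (pseqP b).
have split_le : inv_le (pseq u) (pseq (pslash a b)) <->
    inv_le (take (psize a) (pseq u)) (pseq a) /\ inv_le (drop (psize a) (pseq u)) (pseq b).
  rewrite -{1}(cat_take_drop (psize a) (pseq u)) inv_le_cat ?size_map //; last first.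
    by move=> _ y /mapP[x xa ->] yb; exact: cross.
  by rewrite inv_le_map_addn.
apply/weak_leP/andP => [[_ /split_le[h1 h2]]|[h1 h2]].
  by split; [apply/(weak_le_stP ut sz1) | apply/(weak_le_stP ud sz2)].
split; first by rewrite psize_pslash.
by apply/split_le; split; [apply/(weak_le_stP ut sz1) | apply/(weak_le_stP ud sz2)].
Qed.

Lemma stP_take_pslash a b : stP (take (psize a) (pseq (pslash a b))) = a.
Proof. by apply/val_inj; rewrite [LHS]pseq_stP ?perm_uniq_take //= st_slash_take // pseqP. Qed.

Lemma stP_drop_pslash a b : stP (drop (psize a) (pseq (pslash a b))) = b.
Proof. by apply/val_inj; rewrite [LHS]pseq_stP ?perm_uniq_drop //= st_slash_drop // pseqP. Qed.

Lemma pslash_stP (u : Perm) p : is_gdes (pseq u) p ->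
  pslash (stP (take p (pseq u))) (stP (drop p (pseq u))) = u.
Proof.
move=> g; apply/val_inj; rewrite /= !pseq_stP ?perm_uniq_take ?perm_uniq_drop //.
exact: slash_st_take_drop (pseqP u) g.
Qed.

Lemma pslash_inj a b c d : psize a = psize c -> pslash a b = pslash c d -> a = c /\ b = d.
Proof.
move=> e h; split.
  by rewrite -(stP_take_pslash a b) h e stP_take_pslash.
by rewrite -(stP_drop_pslash a b) h e stP_drop_pslash.
Qed.

Lemma pslashA a b c : pslash (pslash a b) c = pslash a (pslash b c).
Proof. exact/val_inj/slashA. Qed.

Section Mobius.
Local Open Scope ring_scope.

Lemma bigD1_seq_cond (V : nmodType) (I : eqType) (r : seq I) (j : I) (P : pred I)
    (F : I -> V) : j \in r -> uniq r -> P j ->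
  \sum_(i <- r | P i) F i = F j + \sum_(i <- r | P i && (i != j)) F i.
Proof.
move=> jr ur Pj; rewrite -big_filter (bigD1_seq j) ?mem_filter ?Pj ?filter_uniq //.
by rewrite big_filter_cond.
Qed.

Lemma mob_aux_fuel f g u w : (size (Defs.inv (pseq w)) < f)%N ->
  (size (Defs.inv (pseq w)) < g)%N -> mob_aux f u w = mob_aux g u w.
Proof.
elim: f g w => [//|f IH] [//|g] w hf hg /=.
case: (u == w) => //; case: (weak_le u w) => //; congr (- _).
apply: eq_bigr => w' /andP[/andP[_ le] neq].
by apply: IH; apply: leq_trans (weak_le_ltn_inv le neq) _.
Qed.

Lemma mobiusE u v : mobius u v =
  if u == v then 1 else if weak_le u v then
   - \sum_(w <- perms_of (psize v) | weak_le u w && weak_le w v && (w != v)) mobius u w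
  else 0.
Proof.
rewrite /mobius /=; case: (u == v) => //; case: (weak_le u v) => //; congr (- _).
apply: eq_bigr => w /andP[/andP[_ le] neq].
exact: mob_aux_fuel (weak_le_ltn_inv le neq) (ltnSn _).
Qed.

Lemma sum_mobius_interval u v : weak_le u v ->
  \sum_(w <- perms_of (psize v) | weak_le u w && weak_le w v) mobius u w = (u == v)%:R.
Proof.
move=> le; have vin : v \in perms_of (psize v) by rewrite mem_perms_of.
rewrite (bigD1_seq_cond _ vin) ?uniq_perms_of ?le ?weak_le_refl //=.
case: eqP => [<-|/eqP neq]; last by rewrite mobiusE (negbTE neq) le addNr.
rewrite mobiusE eqxx big1 ?addr0 // => w /andP[/andP[l1 l2] n].
by move: n; rewrite (weak_le_anti l2 l1) eqxx.
Qed.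

End Mobius.

(* Unlike [gdes], [is_gdes] also holds at 0 and at n. *)
Lemma kdegE (u : Perm) :
  kdeg u = (count (is_gdes (pseq u)) (iota 0 (psize u).+1)).-1.
Proof.
rewrite /kdeg; have -> : gdes (pseq u) = filter (is_gdes (pseq u)) (iota 1 (psize u).-1) by [].
rewrite /psize; have := is_gdes_size (pseq u); have := is_gdes0 (pseq u).
case: (size (pseq u)) => [|m] h0 hn; first by rewrite /= h0.
have -> : iota 0 m.+2 = 0 :: iota 1 m ++ [:: m.+1] by rewrite -(iotaD 1 m 1) addn1.
by rewrite /= count_cat /= h0 hn size_filter addn0 add1n addn1.
Qed.

Lemma kdeg1P (c : Perm) : reflect
  (0 < psize c /\ forall q, 0 < q < psize c -> ~~ is_gdes (pseq c) q) (kdeg c == 1).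
Proof.
rewrite /kdeg; case: (psize c =P 0) => [->|/eqP ne]; first by constructor => -[].
have ps : (size (pseq c)).-1.+1 = size (pseq c) by rewrite prednK // lt0n.
rewrite eqSS size_eq0 -/(is_gdes _) -[filter _ _ == [::]]negbK -has_filter.
apply: (iffP hasPn) => [h|[_ h] q]; first split; rewrite ?lt0n //.
  by move=> q /andP[q0 qc]; apply: h; rewrite mem_iota add1n q0 ps.
by rewrite mem_iota add1n ps => /andP[q0 qn]; apply: h; rewrite q0.
Qed.

Lemma psize_S1_gt0 (c : S1) : 0 < psize (s1val c).
Proof. by case/kdeg1P: (s1P c). Qed.

Definition glue (ws : seq S1) : Perm := foldr (pslash \o s1val) perm0 ws.

Lemma psize_glue_cons c ws : psize (glue (c :: ws)) = psize (s1val c) + psize (glue ws).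
Proof. exact: psize_pslash. Qed.

Lemma glue_cat xs ys : glue (xs ++ ys) = pslash (glue xs) (glue ys).
Proof.
elim: xs => [|c xs IH]; first exact/val_inj.
by rewrite cat_cons /= -!/(glue _) IH pslashA.
Qed.

Lemma is_gdes_glue_cons c ws q : 0 < q <= psize (s1val c) ->
  is_gdes (pseq (glue (c :: ws))) q = (q == psize (s1val c)).
Proof.
case/andP=> q0 qc; rewrite /= is_gdes_slash_l ?pseqP //.
case: eqP => [->|/eqP ne]; first exact: is_gdes_size.
by apply/negbTE; case/kdeg1P: (s1P c) => _; apply; rewrite q0 ltn_neqAle ne.
Qed.

Lemma glue_inj : injective glue.
Proof.
have glue0 c ws : psize (glue (c :: ws)) != 0.
  by rewrite psize_glue_cons addn_eq0 negb_and -lt0n psize_S1_gt0.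
elim=> [|c r IH] [|c' r'] // e; first by move: (glue0 c' r'); rewrite -e.
  by move: (glue0 c r); rewrite e.
have head_size c1 c2 r1 r2 : glue (c1 :: r1) = glue (c2 :: r2) ->
    psize (s1val c1) <= psize (s1val c2) -> psize (s1val c1) = psize (s1val c2).
  move=> e12 le; apply/eqP; rewrite -(@is_gdes_glue_cons c2 r2) ?psize_S1_gt0 //.
  by rewrite -e12 is_gdes_glue_cons ?psize_S1_gt0 ?leqnn.
have ec : psize (s1val c) = psize (s1val c').
  case: (leqP (psize (s1val c)) (psize (s1val c'))) => [|/ltnW] le.
    exact: (head_size _ _ _ _ e le).
  exact/esym/(head_size _ _ _ _ (esym e) le).
have [e1 e2] := pslash_inj ec e.
by rewrite (IH _ e2); congr (_ :: _); apply: val_inj.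
Qed.

Lemma pslash_S1_factor (u : Perm) : 0 < psize u ->
  exists (c : S1) (x : Perm), u = pslash (s1val c) x.
Proof.
move=> pos; have exP : exists p, (0 < p) && is_gdes (pseq u) p.
  by exists (psize u); rewrite pos is_gdes_size.
case: (ex_minnP exP) => p /andP[p0 gp] pmin.
have szc : psize (stP (take p (pseq u))) = p.
  rewrite psize_stP ?perm_uniq_take // size_takel // pmin //.
  by rewrite pos is_gdes_size.
have ux := pslash_stP gp.
have c1 : kdeg (stP (take p (pseq u))) == 1.
  apply/kdeg1P; split=> [|q /andP[q0 qc]]; first by rewrite szc.
  rewrite -(is_gdes_slash_l _ (pseqP (stP (drop p (pseq u)))) (ltnW qc)) ?pseqP //.
  apply: contraTN qc => gq; rewrite -leqNgt szc pmin //.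
  by rewrite q0 -[u]ux.
by exists (MkS1 c1), (stP (drop p (pseq u))).
Qed.

Lemma glue_surj u : exists ws, glue ws = u.
Proof.
elim: {u}(psize u) {-2}u (leqnn (psize u)) => [|n IH] u hu.
  by exists [::]; rewrite (@psize_eq0 u) //; apply/eqP; rewrite -leqn0.
case: (posnP (psize u)) => [/psize_eq0 ->|pos]; first by exists [::].
have [c [x eu]] := pslash_S1_factor pos; rewrite eu psize_pslash in hu; subst u.
have [ws <-] : exists ws, glue ws = x.
  by apply: IH; rewrite -ltnS (leq_trans _ hu) // -add1n leq_add2r psize_S1_gt0.
by exists (c :: ws).
Qed.

Lemma glue_surjb u : exists ws, glue ws == u.
Proof. by have [ws e] := glue_surj u; exists ws; rewrite e. Qed.

(* The factorization u = c_1 \ ... \ c_k into blocks without global descents. *)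
Definition word (u : Perm) : seq S1 := xchoose (glue_surjb u).

Lemma glue_word u : glue (word u) = u.
Proof. exact/eqP/(xchooseP (glue_surjb u)). Qed.

Lemma word_glue ws : word (glue ws) = ws.
Proof. by apply: glue_inj; rewrite glue_word. Qed.

Lemma word_inj : injective word.
Proof. by move=> u v e; rewrite -(glue_word u) e glue_word. Qed.

Lemma filter_is_gdes_glue ws :
  filter (is_gdes (pseq (glue ws))) (iota 0 (psize (glue ws)).+1) =
  [seq psize (glue (take i ws)) | i <- iota 0 (size ws).+1].
Proof.
elim: ws => [|c ws IH] //; rewrite psize_glue_cons -addnS iotaD filter_cat add0n.
have -> : filter (is_gdes (pseq (glue (c :: ws)))) (iota 0 (psize (s1val c))) = [:: 0].
  case: (psize (s1val c)) (psize_S1_gt0 c) (@is_gdes_glue_cons c ws) => // k _ hc.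
  rewrite /= is_gdes0 (eq_in_filter (a2 := pred0)) ?filter_pred0 // => q.
  rewrite mem_iota add1n => /andP[q0 qk]; rewrite hc ?(ltn_eqF qk) //.
  by rewrite q0 ltnW.
have -> : iota (psize (s1val c)) (psize (glue ws)).+1 =
    map (addn (psize (s1val c))) (iota 0 (psize (glue ws)).+1) by rewrite -iotaDl addn0.
rewrite filter_map (eq_filter (a2 := is_gdes (pseq (glue ws)))) => [|q]; last first.
  exact: is_gdes_slash_r (pseqP _) (pseqP _).
rewrite IH -[iota 0 (size ws).+2]/(0 :: iota 1 (size ws).+1) (iotaDl 1 0).
rewrite map_cons cat1s -!map_comp; congr (_ :: _).
by apply: eq_map => i /=; rewrite psize_glue_cons.
Qed.

Lemma kdeg_glue ws : kdeg (glue ws) = size ws.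
Proof. by rewrite kdegE -size_filter filter_is_gdes_glue size_map size_iota. Qed.

Lemma kdeg_word u : kdeg u = size (word u).
Proof. by rewrite -{1}(glue_word u) kdeg_glue. Qed.

Lemma stP_take_glue ws i :
  stP (take (psize (glue (take i ws))) (pseq (glue ws))) = glue (take i ws).
Proof. by rewrite -{2}(cat_take_drop i ws) glue_cat stP_take_pslash. Qed.

Lemma stP_drop_glue ws i :
  stP (drop (psize (glue (take i ws))) (pseq (glue ws))) = glue (drop i ws).
Proof. by rewrite -{2}(cat_take_drop i ws) glue_cat stP_drop_pslash. Qed.

Section FreeModules.
Local Open Scope ring_scope.

Lemma monalgUZ (K : choiceType) (c : rat) (k : K) : << c *g k >> = c *: << k >>.
Proof. by apply/malgP => k'; rewrite mcoeffZ !mcoeffU mulr_natr. Qed.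

Lemma mcoeff_sum (K : choiceType) (I : Type) (r : seq I) (P : pred I)
    (F : I -> {malg rat[K]}) k :
  (\sum_(i <- r | P i) F i)@_k = \sum_(i <- r | P i) (F i)@_k.
Proof. exact: (big_morph (mcoeff k) (mcoeffD k) (mcoeff0 k)). Qed.

Section LinExt.
Variables (K : choiceType) (V : lmodType rat) (f : K -> V).

Lemma lin_extEw (x : {malg rat[K]}) (d : {fset K}) : (msupp x `<=` d)%fset ->
  lin_ext f x = \sum_(k <- d) x@_k *: f k.
Proof.
move=> le; rewrite /lin_ext (big_fset_incl _ le) // => k _ /mcoeff_outdom ->.
by rewrite scale0r.
Qed.

Lemma lin_ext_is_linear : linear (lin_ext f).
Proof.
move=> c x y; set d := (msupp x `|` msupp y)%fset.
rewrite (@lin_extEw _ d); last first.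
  by rewrite (fsubset_trans (msuppD_le _ _)) // fsetSU // msuppZ_le.
rewrite (@lin_extEw x d) ?fsubsetUl // (@lin_extEw y d) ?fsubsetUr //.
rewrite scaler_sumr -big_split; apply: eq_bigr => k _.
by rewrite mcoeffD mcoeffZ scalerDl scalerA.
Qed.

HB.instance Definition _ :=
  GRing.isLinear.Build rat {malg rat[K]} V *:%R (lin_ext f) lin_ext_is_linear.

Lemma lin_extU k : lin_ext f << k >> = f k.
Proof. by rewrite /lin_ext msuppU oner_eq0 big_seq_fset1 mcoeffUU scale1r. Qed.

End LinExt.

Lemma lin_extE (K : choiceType) (V : lmodType rat) (L : {linear {malg rat[K]} -> V}) x :
  L x = lin_ext (fun k => L << k >>) x.
Proof.
rewrite {1}(monalgE x) linear_sum /lin_ext; apply: eq_bigr => k _.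
by rewrite monalgUZ linearZ.
Qed.

Lemma eq_linear_malg (K : choiceType) (V : lmodType rat)
    (L1 L2 : {linear {malg rat[K]} -> V}) :
  (forall k, L1 << k >> = L2 << k >>) -> forall x, L1 x = L2 x.
Proof. by move=> e x; rewrite lin_extE [RHS]lin_extE; apply: eq_bigr => k _; rewrite e. Qed.

Section Tensor.
Variables (K1 K2 : choiceType).

Lemma tensEl (x : {malg rat[K1]}) (y : {malg rat[K2]}) :
  tens x y = lin_ext (fun a => lin_ext (fun b => << (a, b) >>) y) x.
Proof.
rewrite /tens /lin_ext; apply: eq_bigr => a _; rewrite scaler_sumr.
by apply: eq_bigr => b _; rewrite monalgUZ scalerA.
Qed.

Lemma tensEr (x : {malg rat[K1]}) (y : {malg rat[K2]}) :
  tens x y = lin_ext (fun b => lin_ext (fun a => << (a, b) >>) x) y.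
Proof.
rewrite /tens /lin_ext exchange_big; apply: eq_bigr => b _; rewrite scaler_sumr.
by apply: eq_bigr => a _; rewrite monalgUZ scalerA mulrC.
Qed.

Lemma tens_is_bilinear : bilinear_for
  (GRing.Scale.Law.clone _ _ *:%R _) (GRing.Scale.Law.clone _ _ *:%R _) (@tens K1 K2).
Proof.
split=> [y|x] c u v /=; first by rewrite !tensEl lin_ext_is_linear.
by rewrite !tensEr lin_ext_is_linear.
Qed.

HB.instance Definition _ := bilinear_isBilinear.Build rat {malg rat[K1]} {malg rat[K2]}
  {malg rat[(K1 * K2)%type]} _ _ (@tens K1 K2) tens_is_bilinear.

HB.instance Definition _ (x : {malg rat[K1]}) :=
  GRing.isLinear.Build rat {malg rat[K2]} {malg rat[(K1 * K2)%type]} *:%R (tens x)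
    (tens_is_bilinear.2 x).

Lemma tensUU (a : K1) (b : K2) : tens << a >> << b >> = << (a, b) >>.
Proof. by rewrite tensEl !lin_extU. Qed.

End Tensor.

Section TensorMap.
Variables (K1 K2 L1 L2 : choiceType).

HB.instance Definition _ f g := GRing.Linear.copy (@tmap K1 K2 L1 L2 f g)
  (lin_ext (fun ab => tens (f << ab.1 >>) (g << ab.2 >>))).

Lemma tmapU f g (ab : K1 * K2) :
  @tmap K1 K2 L1 L2 f g << ab >> = tens (f << ab.1 >>) (g << ab.2 >>).
Proof. exact: lin_extU. Qed.

Lemma tmap_tens (f : {linear {malg rat[K1]} -> {malg rat[L1]}})
    (g : {linear {malg rat[K2]} -> {malg rat[L2]}}) x y :
  tmap f g (tens x y) = tens (f x) (g y).
Proof.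
have basis_r b : tmap f g (tens x << b >>) = tens (f x) (g << b >>).
  apply: (eq_linear_malg (L1 := tmap f g \o applyr (@tens K1 K2) << b >>)
                         (L2 := applyr (@tens L1 L2) (g << b >>) \o f)) => a.
  by rewrite /= tensUU tmapU.
apply: (eq_linear_malg (L1 := tmap f g \o tens x) (L2 := tens (f x) \o g)) => b.
exact: basis_r.
Qed.

End TensorMap.

End FreeModules.

Definition weak_up (u : Perm) : seq Perm := [seq w <- perms_of (psize u) | weak_le u w].

Lemma mem_weak_up u w : (w \in weak_up u) = weak_le u w.
Proof.
rewrite mem_filter mem_perms_of andbC.
by case: (boolP (weak_le u w)) => [/weak_le_psize ->|]; rewrite ?eqxx ?andbF.
Qed.

Lemma uniq_weak_up u : uniq (weak_up u).
Proof. exact/filter_uniq/uniq_perms_of. Qed.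

Lemma psize_weak_up u w : w \in weak_up u -> psize w = psize u.
Proof. by rewrite mem_weak_up => /weak_le_psize. Qed.

Lemma perm_weak_up_gdes (u : Perm) p : p <= psize u ->
  perm_eq [seq w <- weak_up u | is_gdes (pseq w) p]
    [seq pslash ab.1 ab.2 | ab <- [seq (a, b) | a <- weak_up (stP (take p (pseq u))),
                                                b <- weak_up (stP (drop p (pseq u)))]].
Proof.
move=> hp; set A := stP (take p (pseq u)); set B := stP (drop p (pseq u)).
have szA : psize A = p by rewrite psize_stP ?perm_uniq_take // size_takel.
have szB : psize B = psize u - p by rewrite psize_stP ?perm_uniq_drop // size_drop.
have hu : psize u = psize A + psize B by rewrite szA szB subnKC.
apply: uniq_perm; first exact/filter_uniq/uniq_weak_up.
  rewrite map_inj_in_uniq.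
    by apply: allpairs_uniq; rewrite ?uniq_weak_up // => -[? ?] [? ?] _ _ [-> ->].
  move=> x y /allpairsP[[a b] [/= /psize_weak_up ha _ ->]].
  move=> /allpairsP[[c d] [/= /psize_weak_up hc _ ->]] /= e.
  by have [-> ->] := pslash_inj (etrans ha (esym hc)) e.
move=> w; rewrite mem_filter mem_weak_up; apply/andP/mapP => [[g le]|].
  have ew := pslash_stP g; have sw := weak_le_psize le.
  move: le; rewrite -{1}ew weak_le_pslash; last by rewrite -ew psize_pslash in sw.
  have pw : p <= size (pseq w) by rewrite -/(psize w) -sw.
  rewrite psize_stP ?perm_uniq_take // size_takel // => /andP[la lb].
  exists (stP (take p (pseq w)), stP (drop p (pseq w))) => //.
  apply/allpairsP; exists (stP (take p (pseq w)), stP (drop p (pseq w))).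
  by rewrite /= !mem_weak_up.
case=> _ /allpairsP[[a b] [/= la lb ->]] ->; move: la lb; rewrite !mem_weak_up => la lb.
have sa : psize a = p by rewrite -(weak_le_psize la).
rewrite weak_le_pslash -?(weak_le_psize la) -?(weak_le_psize lb) -?hu // szA la lb.
by rewrite -sa is_gdes_slash ?pseqP.
Qed.

Section Isomorphism.
Local Open Scope ring_scope.

Lemma sum_weak_up_gdes (V : nmodType) (F : Perm -> Perm -> V) (u : Perm) p :
    (p <= psize u)%N ->
  \sum_(w <- weak_up u | is_gdes (pseq w) p)
     F (stP (take p (pseq w))) (stP (drop p (pseq w))) =
  \sum_(a <- weak_up (stP (take p (pseq u))))
     \sum_(b <- weak_up (stP (drop p (pseq u)))) F a b.
Proof.
move=> hp; rewrite -big_filter (perm_big _ (perm_weak_up_gdes hp)) big_map big_allpairs_dep.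
apply: eq_big_seq => a /psize_weak_up sa; apply: eq_bigr => b _ /=.
have pa : p = psize a by rewrite sa psize_stP ?perm_uniq_take // size_takel.
by rewrite pa stP_take_pslash stP_drop_pslash.
Qed.

Definition phiB (u : Perm) : QV := \sum_(w <- weak_up u) << word w >>.
Definition phi : SSym -> QV := lin_ext phiB.
Definition psi : QV -> SSym := lin_ext (fun ws => M (glue ws)).

HB.instance Definition _ := GRing.Linear.copy phi (lin_ext phiB).
HB.instance Definition _ := GRing.Linear.copy psi (lin_ext (fun ws => M (glue ws))).
HB.instance Definition _ := GRing.Linear.copy copS (lin_ext copS_basis).
HB.instance Definition _ := GRing.Linear.copy copQ (lin_ext copQ_basis).

Lemma phiU u : phi << u >> = phiB u. Proof. exact: lin_extU. Qed.

(* Mobius inversion on the upper interval of u. *)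
Lemma phiM u : phi (M u) = << word u >>.
Proof.
set r := perms_of (psize u).
transitivity (\sum_(v <- r | weak_le u v) \sum_(w <- r | weak_le v w)
                 mobius u v *: (<< word w >> : QV)).
  rewrite /M linear_sum; apply: eq_bigr => v le.
  by rewrite linearZ /= phiU /phiB scaler_sumr big_filter -(weak_le_psize le).
rewrite (exchange_big_dep (weak_le u)) /=; last by move=> v w; apply: weak_le_trans.
rewrite (bigD1_seq_cond _ _ (uniq_perms_of _) (weak_le_refl u)) ?mem_perms_of //.
rewrite -scaler_suml sum_mobius_interval ?weak_le_refl // eqxx scale1r big1 ?addr0 //.
move=> w /andP[le nw]; rewrite -scaler_suml /r (weak_le_psize le) sum_mobius_interval //.
by rewrite eq_sym (negbTE nw) scale0r.
Qed.

Lemma phiB_coef u v : (phiB u)@_(word v) = (weak_le u v)%:R.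
Proof.
rewrite /phiB mcoeff_sum.
under eq_bigr => w _ do rewrite mcoeffU (inj_eq word_inj).
case: (boolP (weak_le u v)) => le.
  rewrite (bigD1_seq v) ?mem_weak_up ?uniq_weak_up //= eqxx big1 ?addr0 // => w nw.
  by rewrite (negbTE nw).
rewrite big1_seq // => w /andP[_]; rewrite mem_weak_up.
by case: eqP => // ->; rewrite (negbTE le).
Qed.

Lemma phi_coef x k : (phi x)@_k = \sum_(u <- msupp x) x@_u * (phiB u)@_k.
Proof. by rewrite /phi /lin_ext mcoeff_sum; apply: eq_bigr => u _; rewrite mcoeffZ. Qed.

(* phi is unitriangular for the weak order, graded by the number of inversions. *)
Lemma phi_eq0 x : phi x = 0 -> x = 0.
Proof.
move=> h; apply/malgP => k; rewrite mcoeff0; apply/eqP; rewrite mcoeff_eq0.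
apply/negP => vx0.
have exP : exists m, has (fun v => size (Defs.inv (pseq v)) == m) (msupp x).
  by exists (size (Defs.inv (pseq k))); apply/hasP; exists k.
case: (ex_minnP exP) => m /hasP[v vx /eqP em] mmin.
have := congr1 (mcoeff (word v)) h; rewrite phi_coef mcoeff0.
rewrite (bigD1_seq v) ?fset_uniq //= phiB_coef weak_le_refl mulr1.
rewrite big_seq_cond big1 ?addr0 => [/eqP|w /andP[wx nw]]; first by rewrite mcoeff_eq0 vx.
rewrite phiB_coef; case: (boolP (weak_le w v)) => le; last by rewrite mulr0.
have := weak_le_ltn_inv le nw; rewrite em ltnNge mmin //.
by apply/hasP; exists w.
Qed.

Lemma phiK : cancel psi phi.
Proof.
move=> y; rewrite /psi /lin_ext linear_sum [RHS](monalgE y); apply: eq_bigr => w _.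
by rewrite linearZ /= phiM word_glue [RHS]monalgUZ.
Qed.

Lemma psiK : cancel phi psi.
Proof.
move=> x; apply/eqP; rewrite -subr_eq0; apply/eqP/phi_eq0.
by rewrite linearB /= phiK subrr.
Qed.

Lemma QGrP k (y : QV) : QGr k y <-> (forall w, size w != k -> y@_w = 0).
Proof.
split=> [h w nw|h w wy]; first by apply/eqP; rewrite mcoeff_eq0; apply: contra nw => /h ->.
by apply/eqP; apply: contraTT wy => /h nw; rewrite -mcoeff_eq0 nw.
Qed.

Lemma SSymGr_phi k x : SSymGr k x -> QGr k (phi x).
Proof.
case=> s [c [hs ->]]; apply/QGrP => w nw; rewrite linear_sum mcoeff_sum big1_seq //.
move=> u /andP[_ us]; rewrite linearZ /= phiM mcoeffZ mcoeffU.
case: eqP => [ew|]; last by rewrite mulr0.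
by move: nw; rewrite -ew -kdeg_word (eqP (allP hs u us)) eqxx.
Qed.

Lemma SSymGr_psi k y : QGr k y -> SSymGr k (psi y).
Proof.
move=> hy; exists (map glue (msupp y)), (fun u => y@_(word u)); split.
  by apply/allP => _ /mapP[w wy ->]; rewrite kdeg_glue hy.
by rewrite big_map /psi /lin_ext; apply: eq_bigr => w _; rewrite word_glue.
Qed.

Lemma SSymGr_phiE k x : SSymGr k x <-> QGr k (phi x).
Proof. by split=> [/SSymGr_phi|/SSymGr_psi]; rewrite ?psiK. Qed.

Lemma eps_phi x : epsQ (phi x) = epsS x.
Proof.
rewrite /epsQ /epsS -(word_glue [::]) phi_coef [in RHS](monalgE x) mcoeff_sum.
apply: eq_bigr => u _; rewrite phiB_coef mcoeffU mulr_natr; congr (_ *+ nat_of_bool _).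
apply/idP/eqP => [/weak_le_psize/psize_eq0 //|->]; exact: weak_le_refl.
Qed.

Lemma copQ_word w : copQ << word w >> =
  \sum_(p <- iota 0 (psize w).+1 | is_gdes (pseq w) p)
     << (word (stP (take p (pseq w))), word (stP (drop p (pseq w)))) >>.
Proof.
have [ws <-] := glue_surj w; rewrite word_glue -big_filter filter_is_gdes_glue big_map.
rewrite /copQ lin_extU /copQ_basis -(big_mkord xpredT (fun i => << (take i ws, drop i ws) >>)).
by apply: eq_bigr => i _; rewrite stP_take_glue stP_drop_glue !word_glue.
Qed.

Lemma copQ_phi x : copQ (phi x) = tmap phi phi (copS x).
Proof.
apply: (eq_linear_malg (L1 := copQ \o phi) (L2 := tmap phi phi \o copS)) => {x} u /=.
rewrite phiU /phiB linear_sum /copS lin_extU /copS_basis linear_sum /=.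
under eq_big_seq => w /psize_weak_up sw do rewrite copQ_word sw.
rewrite (exchange_big_dep xpredT) // -(big_mkord xpredT
  (fun p => tmap phi phi << (stP (take p (pseq u)), stP (drop p (pseq u))) >>)).
apply: eq_big_seq => p; rewrite mem_iota add0n ltnS => hp.
rewrite (sum_weak_up_gdes (fun a b => << (word a, word b) >> : QV2) hp).
rewrite tmapU /= !phiU /phiB linear_sumlz; apply: eq_bigr => a _.
by rewrite linear_sumr; apply: eq_bigr => b _; rewrite -[RHS]/(tens _ _) tensUU.
Qed.
End Isomorphism.

Section Grading.
Local Open Scope ring_scope.

Definition QV_proj k (y : QV) : QV := \sum_(w <- msupp y | size w == k) y@_w *: << w >>.

Lemma QGr_proj k y : QGr k (QV_proj k y).
Proof.
apply/QGrP => w nw; rewrite mcoeff_sum big1 // => w' /eqP sw.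
rewrite mcoeffZ mcoeffU; case: eqP => [e|]; last by rewrite mulr0.
by move: nw; rewrite -e sw eqxx.
Qed.

Lemma sum_QV_proj (y : QV) n : (forall w, w \in msupp y -> size w < n)%N ->
  \sum_(k <- iota 0 n) QV_proj k y = y.
Proof.
move=> hn; rewrite /QV_proj (exchange_big_dep xpredT) //= [RHS](monalgE y).
apply: eq_big_seq => w wy; have wn : size w \in iota 0 n by rewrite mem_iota hn.
rewrite (bigD1_seq_cond _ wn) ?iota_uniq ?eqxx // big1 ?addr0; first exact/esym/monalgUZ.
by move=> k /andP[/eqP ->]; rewrite eqxx.
Qed.

Lemma tmap_psi_phi (z : SSym2) : tmap psi psi (tmap phi phi z) = z.
Proof.
apply: (eq_linear_malg (L1 := tmap psi psi \o tmap phi phi) (L2 := idfun)) => -[a b] /=.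
by rewrite tmapU tmap_tens /= !psiK tensUU.
Qed.

Lemma QGrU k c w : size w = k -> QGr k << c *g w >>.
Proof. by move=> <- w' /(fsubsetP msuppU_le); rewrite inE => /eqP ->. Qed.

Lemma SSym_decomposition (x : SSym) : exists s : seq SSym,
  x = \sum_(y <- s) y /\ forall i, (i < size s)%N -> SSymGr i (nth 0 s i).
Proof.
set y := phi x; exists [seq psi (QV_proj k y) | k <- iota 0 (\max_(w <- msupp y) size w).+1].
split=> [|i]; last first.
  rewrite size_map size_iota => hi; rewrite (nth_map 0%N) ?size_iota // nth_iota //.
  by apply: SSymGr_psi; exact: QGr_proj.
rewrite big_map -linear_sum sum_QV_proj => [|w wy]; first by rewrite /= /y psiK.
by rewrite ltnS (leq_bigmax_seq (F := size) w wy).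
Qed.

Lemma SSym_direct (s : seq SSym) :
  (forall i, (i < size s)%N -> SSymGr i (nth 0 s i)) ->
  \sum_(y <- s) y = 0 -> forall i, nth 0 s i = 0.
Proof.
move=> hs hsum i; case: (ltnP i (size s)) => hi; last by rewrite nth_default.
have hq j : (j < size s)%N -> forall w, size w != j -> (phi (nth 0 s j))@_w = 0.
  by move=> /hs /SSymGr_phi /QGrP.
apply: phi_eq0; apply/malgP => w; rewrite mcoeff0.
case: (eqVneq (size w) i) => [ew|]; last exact: hq.
have := congr1 (mcoeff w \o phi) hsum; rewrite /= linear_sum linear0 mcoeff0 mcoeff_sum.
rewrite (big_nth 0) /index_iota subn0.
rewrite (bigD1_seq_cond _ (_ : i \in _)) ?mem_iota ?iota_uniq // big_seq_cond big1 ?addr0 //.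
move=> j /and3P[]; rewrite mem_iota add0n => hj _ nj; apply: hq => //.
by rewrite ew eq_sym.
Qed.

Lemma copS_graded k (x : SSym) : SSymGr k x ->
  exists t : seq (nat * SSym * SSym),
    copS x = \sum_(abc <- t) tens abc.1.2 abc.2 /\
    forall abc, abc \in t ->
      [/\ (abc.1.1 <= k)%N, SSymGr abc.1.1 abc.1.2 & SSymGr (k - abc.1.1) abc.2].
Proof.
move=> /SSymGr_phi hy; set y := phi x in hy.
exists [seq (i, psi << y@_w *g take i w >>, psi << drop i w >>)
          | w <- msupp y, i <- iota 0 (size w).+1]; split.
  rewrite -(tmap_psi_phi (copS x)) -copQ_phi -/y.
  have -> : copQ y = \sum_(w <- msupp y) \sum_(i <- iota 0 (size w).+1)
                       << y@_w *g (take i w, drop i w) >>.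
    rewrite /copQ /lin_ext; apply: eq_bigr => w _; rewrite /copQ_basis scaler_sumr.
    rewrite -(big_mkord xpredT (fun i => y@_w *: << (take i w, drop i w) >>)).
    by apply: eq_bigr => i _; rewrite [RHS]monalgUZ.
  rewrite big_allpairs_dep linear_sum.
  apply: eq_bigr => w _; rewrite linear_sum; apply: eq_bigr => i _.
  rewrite monalgUZ linearZ /= tmapU [in RHS]monalgUZ linearZ /=.
  by rewrite -[X in _ = X]/(tens _ _) linearZl_LR.
move=> _ /allpairsPdep[w [i [wy hi ->]]] /=; have sw := hy w wy.
move: hi; rewrite mem_iota ltnS sw => hi.
split=> //; apply: SSymGr_psi; apply: QGrU; rewrite ?size_takel ?size_drop ?sw //.
Qed.
End Grading.

Theorem mainTheorem10 :
  (forall x : SSym, exists s : seq SSym,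
      x = (\sum_(y <- s) y)%R /\
      forall i, (i < size s)%N -> SSymGr i (nth 0%R s i)) /\
  (forall s : seq SSym,
      (forall i, (i < size s)%N -> SSymGr i (nth 0%R s i)) ->
      (\sum_(y <- s) y)%R = 0%R -> forall i, nth 0%R s i = 0%R) /\
  (forall (k : nat) (x : SSym), SSymGr k x ->
      exists t : seq (nat * SSym * SSym),
        copS x = (\sum_(abc <- t) tens abc.1.2 abc.2)%R /\
        forall abc, abc \in t ->
          [/\ (abc.1.1 <= k)%N, SSymGr abc.1.1 abc.1.2 & SSymGr (k - abc.1.1) abc.2]) /\
  (exists phi : SSym -> QV,
      linear phi /\ bijective phi /\
      (forall (k : nat) (x : SSym), SSymGr k x <-> QGr k (phi x)) /\
      (forall x : SSym, copQ (phi x) = tmap phi phi (copS x)) /\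
      (forall x : SSym, epsQ (phi x) = epsS x)).
Proof.
split; first exact: SSym_decomposition.
split; first exact: SSym_direct.
split; first exact: copS_graded.
exists phi; split; first exact: linearP.
split; first by exists psi; [exact: psiK | exact: phiK].
split; first exact: SSymGr_phiE.
by split; [exact: copQ_phi | exact: eps_phi].
Qed.
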